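(* Let $(X,d)$ be a compact metric space, $\mathbb{F}=\{f_n:n\in\mathbb{N}\}$ a sequence of continuous surjective self-maps of $X$, $k\in\mathbb{N}$ and $x,y\in X$. If $\mathbb{F}$ is commutative, then: if $(x,y)$ is proximal for $(X,\mathbb{F}_k)$, then $(x,y)$ is proximal for $(X,\mathbb{F})$. Further, if $\mathbb{F}$ is commutative and each $f_i$ is bijective, then: if $(x,y)$ is proximal for $(X,\mathbb{F})$, then $(x,y)$ is proximal for $(X,\mathbb{F}_k)$.
   Context: Write $\omega_n=f_n\circ\cdots\circ f_1$ and, for $n>k$, $\omega^k_n=f_n\circ\cdots\circ f_{k+1}$; $\mathbb{F}_k=\{f_n:n\ge k+1\}$ is the truncated family. $\mathbb{F}$ is commutative if $f_i\circ f_j=f_j\circ f_i$ for all $i,j$. A pair $(x,y)$ is proximal for $(X,\mathbb{F})$ if $\liminf_{n\to\infty}d(\omega_n(x),\omega_n(y))=0$, and proximal for $(X,\mathbb{F}_k)$ if $\liminf_{n\to\infty}d(\omega^k_n(x),\omega^k_n(y))=0$. *)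

From HB Require Import structures.
From mathcomp Require Import all_boot all_order all_algebra.
From mathcomp Require Import all_classical all_reals all_analysis.
Set Implicit Arguments. Unset Strict Implicit. Unset Printing Implicit Defensive.
Import Order.TTheory GRing.Theory Num.Theory.
Local Open Scope ring_scope.

(* Convention: the family F = {f_1, f_2, ...} is encoded by f : nat -> X -> X
   with f_(n+1) = f n (0-based shift). *)

(* omega_from f k n = f_n o ... o f_(k+1) for n > k, identity for n <= k. *)
Fixpoint omega_from {X : Type} (f : nat -> X -> X) (k n : nat) : X -> X :=
  match n with
  | 0 => id
  | n'.+1 => if (k <= n')%N then f n' \o omega_from f k n' else id
  end.

Definition omega {X : Type} (f : nat -> X -> X) (n : nat) : X -> X :=
  omega_from f 0 n.

Definition commutative_family {X : Type} (f : nat -> X -> X) : Prop :=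
  forall i j, f i \o f j = f j \o f i.

Definition proximal_k {R : realType} {X : metricType R}
  (f : nat -> X -> X) (k : nat) (x y : X) : Prop :=
  limn_einf (fun n => (mdist (omega_from f k n x) (omega_from f k n y))%:E) = 0%E.

Definition proximal {R : realType} {X : metricType R}
  (f : nat -> X -> X) (x y : X) : Prop :=
  limn_einf (fun n => (mdist (omega f n x) (omega f n y))%:E) = 0%E.

From HB Require Import structures.
From mathcomp Require Import all_boot all_order all_algebra.
From mathcomp Require Import all_classical all_reals all_analysis.
From mathcomp Require Import lra.
Set Implicit Arguments. Unset Strict Implicit. Unset Printing Implicit Defensive.
Import Order.TTheory GRing.Theory Num.Theory.
Import metricType_numDomainType.
Local Open Scope classical_set_scope.
Local Open Scope ring_scope.

(* By commutativity, for n >= k the map omega_n factors as omega_k o omega^k_n.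
   On a compact space the continuous map omega_k is uniformly continuous, so
   whenever omega^k_n x and omega^k_n y are close, so are omega_n x and
   omega_n y.  Conversely, if omega_k is injective, then omega^k_n is a
   continuous function of omega_n, and compactness again turns this into a
   uniform modulus: closeness of omega_n x and omega_n y forces closeness of
   omega^k_n x and omega^k_n y.  Both transfers preserve liminf = 0. *)

Section LiminfZero.
Variable R : realType.

Lemma limn_einf_eq0P (r : nat -> R) : (forall n, 0 <= r n) ->
  limn_einf (fun n => (r n)%:E) = 0%E <->
  forall e, 0 < e -> forall N, exists2 n, (N <= n)%N & r n < e.
Proof.
move=> r_ge0; set u := fun n => (r n)%:E.
have -> : limn_einf u = ereal_sup (range (einfs u)).
  by rewrite limn_einf_lim; apply/cvg_lim => //; exact: cvg_einfs_sup.
have einfs_ge0 N : (0 <= einfs u N)%E.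
  by apply: le_ereal_inf_tmp => _ [n _ <-]; rewrite lee_fin.
split=> [sup0 e e0 N | small].
- apply: contrapT => no_small.
  have : (e%:E <= einfs u N)%E.
    apply: le_ereal_inf_tmp => _ [n /= Nn <-]; rewrite lee_fin leNgt.
    by apply/negP => rn; apply: no_small; exists n.
  have inf_in_range : range (einfs u) (einfs u N) by exists N.
  move=> /le_trans /(_ (ereal_sup_ubound inf_in_range)).
  by rewrite sup0 lee_fin leNgt e0.
- apply/eqP; rewrite eq_le; apply/andP; split; last first.
    exact: le_trans (einfs_ge0 0%N) (ereal_sup_ubound _).
  apply: ge_ereal_sup => _ [N _ <-]; apply/lee_addgt0Pr => e e0.
  have [n Nn rn] := small e e0 N.
  rewrite add0e; apply: le_trans (ereal_inf_lbound _) _; first by exists n.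
  by rewrite lee_fin ltW.
Qed.

Lemma limn_einf_eq0_transfer (r s : nat -> R) (K : nat) :
  (forall n, 0 <= r n) -> (forall n, 0 <= s n) ->
  (forall e, 0 < e -> exists2 d, 0 < d &
     forall n, (K <= n)%N -> r n < d -> s n < e) ->
  limn_einf (fun n => (r n)%:E) = 0%E -> limn_einf (fun n => (s n)%:E) = 0%E.
Proof.
move=> r_ge0 s_ge0 modulus /(limn_einf_eq0P r_ge0) r_small.
apply/(limn_einf_eq0P s_ge0) => e e0 N.
have [d d0 rs] := modulus e e0.
have [n Nn rn] := r_small d d0 (maxn N K).
rewrite geq_max in Nn; case/andP: Nn => Nn Kn.
by exists n => //; exact: rs.
Qed.

End LiminfZero.

Section CompactMetric.
Variables (R : realType) (X : metricType R).

Lemma mdist_comp_near (g : X -> X) (a b : X) (eta : R) :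
  continuous g -> 0 < eta ->
  \forall z \near (a, b),
    mdist (g a) (g b) - eta < mdist (g z.1) (g z.2) /\
    mdist (g z.1) (g z.2) < mdist (g a) (g b) + eta.
Proof.
move=> gC eta0; have eta2 : 0 < eta / 2 by rewrite divr_gt0.
exists ([set a' | mdist (g a) (g a') < eta / 2],
        [set b' | mdist (g b) (g b') < eta / 2]).
  by split; [exact: (cvgr_dist_lt (gC a)) | exact: (cvgr_dist_lt (gC b))].
case=> a' b' [/= ha hb].
have := metric_triangle (g a) (g a') (g b).
have := metric_triangle (g a') (g b') (g b).
have := metric_triangle (g a') (g a) (g b').
have := metric_triangle (g a) (g b) (g b').
rewrite (metric_sym (g b') (g b)) (metric_sym (g a') (g a)).
rewrite [eta in _ - eta]splitr [eta in _ + eta]splitr; lra.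
Qed.

Section Factor.
Variables (p q : X -> X).
Hypotheses (pC : continuous p) (qC : continuous q)
  (q_factors : forall a b, p a = p b -> q a = q b).

Lemma mdist_factor_near (z : X * X) (e : R) : 0 < e ->
  \forall z' \near z & d \near (0:R)^'+,
    mdist (p z'.1) (p z'.2) < d -> mdist (q z'.1) (q z'.2) < e.
Proof.
case: z => a b e0; have [pab | pab] := eqVneq (p a) (p b).
- exists ([set z | mdist (q a) (q b) - e < mdist (q z.1) (q z.2) /\
                   mdist (q z.1) (q z.2) < mdist (q a) (q b) + e], setT).
    by split; [exact: mdist_comp_near | exact: filterT].
  case=> z' d [/= [_ qz'] _] _.
  by move: qz'; rewrite (q_factors pab) mdistxx add0r.
- set r := mdist (p a) (p b).
  have r2 : 0 < r / 2 by rewrite divr_gt0 // mdist_gt0.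
  exists ([set z | r - r / 2 < mdist (p z.1) (p z.2) /\
                   mdist (p z.1) (p z.2) < r + r / 2], [set d | d < r / 2]).
    by split; [exact: mdist_comp_near | exact: nbhs_right_lt].
  case=> z' d [/= [pz' _] /= dr] pd.
  by have := lt_trans pz' (lt_trans pd dr); rewrite {1}(splitr r) addrK ltxx.
Qed.

Lemma compact_mdist_uniform_factor : compact [set: X] ->
  forall e, 0 < e -> exists2 d, 0 < d &
    forall a b, mdist (p a) (p b) < d -> mdist (q a) (q b) < e.
Proof.
move=> cX e e0.
have cXX : compact [set: X * X] by rewrite -setXTT; exact: compact_setX.
have /compact_near_coveringP := cXX.
move=> /(_ R (0:R)^'+ (fun d z => mdist (p z.1) (p z.2) < d ->
                                  mdist (q z.1) (q z.2) < e) _) cover.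
have {}cover := cover (fun z _ => mdist_factor_near z e0).
near (0:R)^'+ => d.
exists d; first by near: d; exact: nbhs_right_gt.
by move=> a b; exact: (near cover d _ (a, b) I).
Unshelve. all: by end_near.
Qed.

End Factor.
End CompactMetric.

Section Omega.
Variables (X : Type) (f : nat -> X -> X).

Lemma omega_from_le m n z : (n <= m)%N -> omega_from f m n z = z.
Proof.
case: n => [//|n] /= nm.
by rewrite ifF //; apply/negbTE; rewrite -ltnNge; exact: leq_ltn_trans nm.
Qed.

Lemma omega_split k n z : (k <= n)%N ->
  omega f n z = omega_from f k n (omega f k z).
Proof.
rewrite /omega; elim: n => [|n IH]; first by rewrite leqn0 => /eqP ->.
rewrite leq_eqVlt => /orP [/eqP -> | ].
  by rewrite [omega_from f n.+1 _ _]omega_from_le.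
by rewrite ltnS => kn; rewrite /= kn /= IH.
Qed.

Lemma omega_from_commute (g : X -> X) :
  (forall j z, g (f j z) = f j (g z)) ->
  forall m n z, g (omega_from f m n z) = omega_from f m n (g z).
Proof.
move=> gf m; elim=> [//|n IH] z /=.
by case: ifP => _ //=; rewrite gf IH.
Qed.

Lemma omega_commute_split k n z : commutative_family f -> (k <= n)%N ->
  omega f n z = omega f k (omega_from f k n z).
Proof.
move=> fC kn; rewrite (omega_split z kn).
have fj_omega j m l w : f j (omega_from f m l w) = omega_from f m l (f j w).
  by apply: omega_from_commute => i v; have /(congr1 (@^~ v)) := fC j i.
by rewrite (omega_from_commute (fun j w => esym (fj_omega j k n w))).
Qed.

Lemma omega_from_inj m n : (forall i, injective (f i)) ->
  injective (omega_from f m n).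
Proof.
move=> f_inj; elim: n => [//|n IH] /=.
by case: ifP => _ //; exact: inj_comp.
Qed.

End Omega.

Lemma omega_from_continuous (R : realType) (X : metricType R)
    (f : nat -> X -> X) m n :
  (forall i, continuous (f i)) -> continuous (omega_from f m n).
Proof.
move=> fC; elim: n => [|n IH] /=; first by move=> z; exact: cvg_id.
case: ifP => _ z; last exact: cvg_id.
exact: continuous_comp (IH z) (fC n _).
Qed.

Theorem mainTheorem3 (R : realType) (X : metricType R) (f : nat -> X -> X)
  (k : nat) (x y : X) :
  compact [set: X] ->
  (forall n, continuous (f n)) ->
  (forall n (z : X), exists w : X, f n w = z) ->
  (commutative_family f -> proximal_k f k x y -> proximal f x y) /\
  (commutative_family f -> (forall n, bijective (f n)) ->
     proximal f x y -> proximal_k f k x y).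
Proof.
move=> cX fC _.
have omega_kC : continuous (omega f k) := @omega_from_continuous _ _ f 0%N k fC.
have idC : continuous (@id X) by move=> z; exact: cvg_id.
split=> [f_comm | f_comm f_bij].
- apply: (limn_einf_eq0_transfer (K := k)) => [n|n|e e0]; try exact: mdist_ge0.
  have [d d0 close] := compact_mdist_uniform_factor idC omega_kC
    (fun a b ab => congr1 (omega f k) ab) cX e0.
  exists d => // n kn; rewrite !(omega_commute_split _ f_comm kn).
  exact: close.
- have omega_k_inj : injective (omega f k).
    exact: (@omega_from_inj _ f 0%N k (fun n => bij_inj (f_bij n))).
  apply: (limn_einf_eq0_transfer (K := k)) => [n|n|e e0]; try exact: mdist_ge0.
  have [d d0 close] := compact_mdist_uniform_factor omega_kC idC
    (fun a b => @omega_k_inj a b) cX e0.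
  exists d => // n kn; rewrite !(omega_commute_split _ f_comm kn).
  exact: close.
Qed.
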